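(* For $\alpha>1$, the function $r_\alpha(p)=\frac{1}{\alpha-1}\log\left(p^\alpha(1-p)^{1-\alpha}+(1-p)^\alpha p^{1-\alpha}\right)$ for $0\le p\le1$ is convex.
   Context: $\alpha>1$ is a real number; $r_\alpha$ may take the value $+\infty$ at $p\in\{0,1\}$. *)

From HB Require Import structures.
From mathcomp Require Import all_boot all_order all_algebra.
From mathcomp Require Import all_classical all_reals all_analysis.
Set Implicit Arguments. Unset Strict Implicit. Unset Printing Implicit Defensive.
Import Order.TTheory GRing.Theory Num.Theory.
Local Open Scope ring_scope.

(* r_alpha(p) = 1/(alpha-1) * ln (p^alpha (1-p)^(1-alpha) + (1-p)^alpha p^(1-alpha))
   for 0 < p < 1, and +oo at p = 0 and p = 1 (the limit value when alpha > 1).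
   Values outside [0,1] are irrelevant (set to +oo, never used). *)
Definition r_alpha (R : realType) (alpha p : R) : \bar R :=
  if (0 < p) && (p < 1) then
    ((alpha - 1)^-1 * ln (p `^ alpha * (1 - p) `^ (1 - alpha)
                          + (1 - p) `^ alpha * p `^ (1 - alpha)))%:E
  else +oo%E.

From HB Require Import structures.
From mathcomp Require Import all_boot all_order all_algebra.
From mathcomp Require Import all_classical all_reals all_analysis.
From mathcomp Require Import ring lra.
Import Order.TTheory GRing.Theory Num.Theory.
Import numFieldNormedType.Exports.
Local Open Scope ring_scope.

(* On (0,1), (alpha - 1) r_alpha = ln (e^a + e^b) with a(p) = alpha ln p + (1 - alpha) ln (1 - p)
   and b(p) = a(1 - p); at p = 0, 1 the value +oo makes convexity trivial.  With the softmax
   weight s = e^a / (e^a + e^b), the second derivative of ln (e^a + e^b) is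
   s a'' + (1 - s) b'' + s (1 - s) (a' - b')^2.  Cleared of denominators it equals
   K + 4 alpha (alpha - 1) e^a e^b, and K >= 0 is exactly the inequality
   cosh (theta z) <= theta cosh z + (1 - theta) for theta = (alpha - 1) / alpha and
   z = 2 alpha ln (p / (1 - p)), which holds by convexity of exp. *)

Section SecondDerivativeTest.
Context {R : realType}.
Variables (f f1 f2 : R -> R) (l r : R).
Hypothesis f_f1 : forall x, l < x < r -> is_derive x 1 f (f1 x).
Hypothesis f1_f2 : forall x, l < x < r -> is_derive x 1 f1 (f2 x).
Hypothesis f2_ge0 : forall x, l < x < r -> 0 <= f2 x.

Let derive_f x : l < x < r -> \forall u \near x, 'D_1 f u = f1 u.
Proof.
move=> xlr; have : x \in `]l, r[ by rewrite in_itv.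
move/near_in_itvoo; apply: filterS => u; rewrite in_itv /= => ulr.
by rewrite (@derive_val _ _ _ _ _ _ _ (f_f1 _ ulr)).
Qed.

Let continuous_f x : l < x < r -> {for x, continuous f}.
Proof. by move=> /f_f1 [fx _]; exact/differentiable_continuous/derivable1_diffP. Qed.

Let convex_le x y t : l < x < r -> l < y < r -> x <= y -> 0 <= t <= 1 ->
  f (t * x + (1 - t) * y) <= t * f x + (1 - t) * f y.
Proof.
move=> xlr ylr xy /andP[t0 t1].
have inlr z : x < z < y -> l < z < r.
  by case/andP: xlr; case/andP: ylr => ? ? ? ? /andP[? ?]; apply/andP; split; lra.
have := @second_derivative_convex R (f : R -> R^o) x y _ _ _ _ _ (Itv01 t0 t1) xy.
rewrite !convRE /=; apply.
- move=> z /inlr zlr; rewrite (near_eq_derive _ (derive_f _ zlr)).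
  by rewrite (@derive_val _ _ _ _ _ _ _ (f1_f2 _ zlr)); exact: f2_ge0.
- exact/cvg_at_left_filter/continuous_f.
- exact/cvg_at_right_filter/continuous_f.
- by move=> z; rewrite in_itv /= => /inlr /f_f1 [].
- move=> z; rewrite in_itv /= => /inlr zlr.
  apply: (near_eq_derivable (f := f1)); last by have [] := f1_f2 _ zlr.
  by apply: filterS (derive_f _ zlr) => u ->.
Qed.

Lemma second_derivative_convex_itvoo x y t : l < x < r -> l < y < r -> 0 <= t <= 1 ->
  f (t * x + (1 - t) * y) <= t * f x + (1 - t) * f y.
Proof.
move=> xlr ylr t01; have [xy|/ltW yx] := leP x y; first exact: convex_le.
have t01' : 0 <= 1 - t <= 1 by case/andP: t01 => *; apply/andP; split; lra.
have := @convex_le y x (1 - t) ylr xlr yx t01'.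
by rewrite subKr addrC [X in _ <= X]addrC.
Qed.

End SecondDerivativeTest.

Section LogSumExp.
Context {R : realType}.
Implicit Types (a b : R -> R) (u v : R).

Definition lse a b (x : R) := ln (expR (a x) + expR (b x)).
Definition softmax a b (x : R) := expR (a x) / (expR (a x) + expR (b x)).

Lemma addr_expR_gt0 u v : 0 < expR u + expR v.
Proof. by rewrite addr_gt0 ?expR_gt0. Qed.

Lemma is_derive_expR_comp {a : R -> R} {x da : R} :
  is_derive x 1 a da -> is_derive x 1 (fun y => expR (a y)) (expR (a x) * da).
Proof. by move=> ?; apply: (is_derive1_comp (f := expR)). Qed.

Context {a b : R -> R} {x da db : R}.
Hypotheses (a_da : is_derive x 1 a da) (b_db : is_derive x 1 b db).

Let s := softmax a b x.

Let is_derive_expR_sum :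
  is_derive x 1 (fun y => expR (a y) + expR (b y)) (expR (a x) * da + expR (b x) * db).
Proof. exact: is_deriveD (is_derive_expR_comp a_da) (is_derive_expR_comp b_db). Qed.

Lemma is_derive_lse : is_derive x 1 (lse a b) (s * da + (1 - s) * db).
Proof.
have := is_derive1_comp (g := fun y => expR (a y) + expR (b y))
  (is_derive1_ln (addr_expR_gt0 _ _)) is_derive_expR_sum.
move/is_derive_eq; apply; rewrite /s /softmax.
by field; rewrite gt_eqF ?addr_expR_gt0.
Qed.

Lemma is_derive_softmax : is_derive x 1 (softmax a b) (s * (1 - s) * (da - db)).
Proof.
have := is_deriveM (is_derive_expR_comp a_da)
  (is_deriveV (f := fun y => expR (a y) + expR (b y))
    (lt0r_neq0 (addr_expR_gt0 _ _)) is_derive_expR_sum).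
move/is_derive_eq; apply; rewrite /s /softmax /GRing.scale /=.
by field; rewrite gt_eqF ?addr_expR_gt0.
Qed.

Context {a1 b1 : R -> R} {da1 db1 : R}.
Hypotheses (a1_da1 : is_derive x 1 a1 da1) (b1_db1 : is_derive x 1 b1 db1).

Lemma is_derive_lse_slope :
  is_derive x 1 (fun y => softmax a b y * a1 y + (1 - softmax a b y) * b1 y)
    (s * da1 + (1 - s) * db1 + s * (1 - s) * (da - db) * (a1 x - b1 x)).
Proof.
have := is_deriveD (is_deriveM is_derive_softmax a1_da1)
  (is_deriveM (is_deriveB (is_derive_cst (1 : R) x 1) is_derive_softmax) b1_db1).
move/is_derive_eq; apply; rewrite /s /GRing.scale /=.
by change ((cst 1 - softmax a b) x) with (1 - s); rewrite -/s sub0r; ring.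
Qed.

End LogSumExp.

Lemma tilt_curvature_ge0 {R : realFieldType} (alpha p q A B : R) :
  1 <= alpha -> 0 < p -> 0 < q -> p + q = 1 -> 0 < A -> 0 < B ->
  alpha * (A * q / (B * p) + B * p / (A * q))
    <= 2 + (alpha - 1) * (A * p / (B * q) + B * q / (A * p)) ->
  0 <= A / (A + B) * (- alpha / p ^+ 2 - (1 - alpha) / q ^+ 2)
       + (1 - A / (A + B)) * (- alpha / q ^+ 2 - (1 - alpha) / p ^+ 2)
       + A / (A + B) * (1 - A / (A + B))
         * (alpha / p - (1 - alpha) / q + (alpha / q - (1 - alpha) / p)) ^+ 2.
Proof.
move=> alpha1 p0 q0 pq1 A0 B0 chord; set s := A / (A + B).
pose K := 2 * A * B * p * q + (alpha - 1) * (A ^+ 2 * p ^+ 2 + B ^+ 2 * q ^+ 2)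
          - alpha * (A ^+ 2 * q ^+ 2 + B ^+ 2 * p ^+ 2).
have K_ge0 : 0 <= K.
  have := ler_wpM2l (ltW (mulr_gt0 (mulr_gt0 (mulr_gt0 A0 B0) p0) q0)) chord.
  rewrite subr_ge0 /K.
  have -> : A * B * p * q * (alpha * (A * q / (B * p) + B * p / (A * q)))
    = alpha * (A ^+ 2 * q ^+ 2 + B ^+ 2 * p ^+ 2) by field; rewrite !gt_eqF.
  have -> : A * B * p * q * (2 + (alpha - 1) * (A * p / (B * q) + B * q / (A * p)))
    = 2 * A * B * p * q + (alpha - 1) * (A ^+ 2 * p ^+ 2 + B ^+ 2 * q ^+ 2).
    by field; rewrite !gt_eqF.
  done.
have -> : s * (- alpha / p ^+ 2 - (1 - alpha) / q ^+ 2)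
       + (1 - s) * (- alpha / q ^+ 2 - (1 - alpha) / p ^+ 2)
       + s * (1 - s) * (alpha / p - (1 - alpha) / q + (alpha / q - (1 - alpha) / p)) ^+ 2
    = (K + 4 * alpha * (alpha - 1) * A * B) / (p ^+ 2 * q ^+ 2 * (A + B) ^+ 2).
  have q_def : q = 1 - p by lra.
  rewrite /s /K q_def; rewrite q_def in q0.
  by field; rewrite (lt0r_neq0 p0) (lt0r_neq0 q0) lt0r_neq0 ?addr_gt0.
apply: divr_ge0; last by rewrite !mulr_ge0 // ?exprn_ge0 // ltW ?addr_gt0.
have alpha0 : 0 <= alpha by lra.
by apply: addr_ge0 => //; rewrite !mulr_ge0 ?subr_ge0 // ltW.
Qed.

Section RenyiExponent.
Context {R : realType}.
Implicit Types (alpha p x z : R).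

Lemma expR_le_chord0 theta z : 0 <= theta <= 1 ->
  expR (theta * z) <= theta * expR z + (1 - theta).
Proof.
case/andP=> theta0 theta1; have := @convex_expR R (Itv01 theta0 theta1) z 0.
by rewrite !convRE /= expR0 mulr0 addr0 mulr1.
Qed.

Lemma cosh_rescale_le alpha z : 1 <= alpha ->
  alpha * (expR ((alpha - 1) * z) + expR (- ((alpha - 1) * z)))
    <= 2 + (alpha - 1) * (expR (alpha * z) + expR (- (alpha * z))).
Proof.
move=> alpha1; have alpha0 : 0 < alpha by lra.
pose theta := (alpha - 1) / alpha.
have theta01 : 0 <= theta <= 1.
  by apply/andP; split; [rewrite divr_ge0 //; lra | rewrite ler_pdivrMr //; lra].
have theta_alpha : theta * alpha = alpha - 1 by rewrite divfK ?gt_eqF.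
have := lerD (expR_le_chord0 _ (alpha * z) theta01)
  (expR_le_chord0 _ (- (alpha * z)) theta01).
rewrite mulrN !mulrA theta_alpha => /(ler_wpM2l (ltW alpha0)) /le_trans; apply.
rewrite le_eqVlt -theta_alpha /theta; apply/orP; left; apply/eqP.
by field; exact: lt0r_neq0.
Qed.

Lemma is_derive_comp_onem {f : R -> R} {x df : R} :
  is_derive (1 - x) 1 f df -> is_derive x 1 (fun y => f (1 - y)) (- df).
Proof.
move=> fdf; have := is_derive1_comp (g := fun y => 1 - y) fdf
  (is_deriveB (is_derive_cst (1 : R) x 1) (is_derive_id x 1)).
by move/is_derive_eq; apply; rewrite sub0r mulrN1.
Qed.

Lemma is_derive_inv {x : R} : x != 0 -> is_derive x 1 (fun y => y^-1) (- (x ^+ 2)^-1).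
Proof.
move=> x0; have := is_deriveV (f := id) x0 (is_derive_id x 1).
by move/is_derive_eq; apply; rewrite /GRing.scale /= mulr1.
Qed.

Lemma onem_itvoo01 {p : R} : 0 < p < 1 -> 0 < 1 - p < 1.
Proof. by case/andP=> p0 p1; apply/andP; split; lra. Qed.

Definition log_tilt alpha p := alpha * ln p + (1 - alpha) * ln (1 - p).
Definition log_tilt' alpha p := alpha / p - (1 - alpha) / (1 - p).
Definition log_tilt'' alpha p := - alpha / p ^+ 2 - (1 - alpha) / (1 - p) ^+ 2.

Lemma is_derive_log_tilt alpha {p} : 0 < p < 1 ->
  is_derive p 1 (log_tilt alpha) (log_tilt' alpha p).
Proof.
case/andP=> p0 p1; have q0 : 0 < 1 - p by rewrite subr_gt0.
have := is_deriveD (is_deriveZ alpha (is_derive1_ln p0))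
  (is_deriveZ (1 - alpha) (is_derive_comp_onem (is_derive1_ln q0))).
by move/is_derive_eq; apply; rewrite /log_tilt' /GRing.scale /=; ring.
Qed.

Lemma is_derive_log_tilt' alpha {p} : 0 < p < 1 ->
  is_derive p 1 (log_tilt' alpha) (log_tilt'' alpha p).
Proof.
case/andP=> p0 p1; have q0 : 0 < 1 - p by rewrite subr_gt0.
have := is_deriveB (is_deriveZ alpha (is_derive_inv (lt0r_neq0 p0)))
  (is_deriveZ (1 - alpha) (is_derive_comp_onem (is_derive_inv (lt0r_neq0 q0)))).
by move/is_derive_eq; apply; rewrite /log_tilt'' /GRing.scale /=; ring.
Qed.

Definition renyi_lse alpha := lse (log_tilt alpha) (fun p => log_tilt alpha (1 - p)).
Definition renyi_weight alpha := softmax (log_tilt alpha) (fun p => log_tilt alpha (1 - p)).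
Definition renyi_lse' alpha p :=
  renyi_weight alpha p * log_tilt' alpha p
  + (1 - renyi_weight alpha p) * - log_tilt' alpha (1 - p).
Definition renyi_lse'' alpha p :=
  renyi_weight alpha p * log_tilt'' alpha p
  + (1 - renyi_weight alpha p) * log_tilt'' alpha (1 - p)
  + renyi_weight alpha p * (1 - renyi_weight alpha p)
    * (log_tilt' alpha p + log_tilt' alpha (1 - p)) ^+ 2.

Lemma is_derive_renyi_lse alpha {p} : 0 < p < 1 ->
  is_derive p 1 (renyi_lse alpha) (renyi_lse' alpha p).
Proof.
move=> p01; have := is_derive_lse (is_derive_log_tilt alpha p01)
  (is_derive_comp_onem (is_derive_log_tilt alpha (onem_itvoo01 p01))).
by move/is_derive_eq; apply.
Qed.

Lemma is_derive_renyi_lse' alpha {p} : 0 < p < 1 ->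
  is_derive p 1 (renyi_lse' alpha) (renyi_lse'' alpha p).
Proof.
move=> p01; have q01 := onem_itvoo01 p01.
have := is_derive_lse_slope (is_derive_log_tilt alpha p01)
  (is_derive_comp_onem (is_derive_log_tilt alpha q01)) (is_derive_log_tilt' alpha p01)
  (is_deriveN (is_derive_comp_onem (is_derive_log_tilt' alpha q01))).
move/is_derive_eq; apply; rewrite /renyi_lse'' /renyi_weight.
by rewrite /= !opprK expr2 mulrA.
Qed.

Lemma renyi_lse''_ge0 alpha p : 1 <= alpha -> 0 < p < 1 -> 0 <= renyi_lse'' alpha p.
Proof.
move=> alpha1 /andP[p0 p1]; set q := 1 - p.
have q0 : 0 < q by rewrite /q subr_gt0.
have qp : 1 - q = p by rewrite /q; lra.
set A := expR (log_tilt alpha p); set B := expR (log_tilt alpha q).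
set d := ln p - ln q.
have ed : expR d = p / q by rewrite expRD expRN !lnK ?posrE.
have eAB : expR (log_tilt alpha p - log_tilt alpha q) = A / B by rewrite expRD expRN.
have tilt_diff : log_tilt alpha p - log_tilt alpha q = (2 * alpha - 1) * d.
  by rewrite /log_tilt qp /d; ring.
have e_theta : expR ((alpha - 1) * (2 * d)) = A * q / (B * p).
  have -> : (alpha - 1) * (2 * d) = (log_tilt alpha p - log_tilt alpha q) - d.
    by rewrite tilt_diff; ring.
  by rewrite expRD expRN eAB ed invf_div mulf_div.
have e_one : expR (alpha * (2 * d)) = A * p / (B * q).
  have -> : alpha * (2 * d) = (log_tilt alpha p - log_tilt alpha q) + d.
    by rewrite tilt_diff; ring.
  by rewrite expRD eAB ed mulf_div.
have := cosh_rescale_le alpha (2 * d) alpha1.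
rewrite !expRN e_theta e_one !invf_div => chord.
have pq1 : p + q = 1 by rewrite /q; ring.
have := @tilt_curvature_ge0 R alpha p q A B alpha1 p0 q0 pq1 (expR_gt0 _) (expR_gt0 _) chord.
by rewrite /renyi_lse'' /renyi_weight /softmax /log_tilt'' /log_tilt' -/q qp.
Qed.

Lemma renyi_lse_convex alpha x y t :
  1 <= alpha -> 0 < x < 1 -> 0 < y < 1 -> 0 <= t <= 1 ->
  renyi_lse alpha (t * x + (1 - t) * y)
    <= t * renyi_lse alpha x + (1 - t) * renyi_lse alpha y.
Proof.
move=> alpha1; apply: second_derivative_convex_itvoo => p p01.
- exact: is_derive_renyi_lse.
- exact: is_derive_renyi_lse'.
- exact: renyi_lse''_ge0.
Qed.

End RenyiExponent.

Lemma r_alpha_lse {R : realType} (alpha p : R) : 0 < p < 1 ->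
  r_alpha alpha p = ((alpha - 1)^-1 * renyi_lse alpha p)%:E.
Proof.
move=> p01; have /andP[p0 p1] := p01; have q0 : 0 < 1 - p by rewrite subr_gt0.
by rewrite /r_alpha p01 /renyi_lse /lse /log_tilt /powR !gt_eqF // -!expRD subKr.
Qed.

Theorem lemma1 (R : realType) (alpha : R) (halpha : 1 < alpha)
  (x y t : R) (hx : 0 <= x <= 1) (hy : 0 <= y <= 1) (ht : 0 < t < 1) :
  (r_alpha alpha (t * x + (1 - t) * y)
     <= t%:E * r_alpha alpha x + (1 - t)%:E * r_alpha alpha y)%E.
Proof.
have /andP[t0 t1] := ht; have t'0 : 0 < 1 - t by rewrite subr_gt0.
have scaled_neqNy c p : 0 < c -> (c%:E * r_alpha alpha p != -oo)%E.
  by move=> c0; rewrite /r_alpha; case: ifP => _; rewrite ?gt0_muley ?lte_fin.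
have [x01|/negbTE xb] := boolP (0 < x < 1); last first.
  by rewrite [r_alpha _ x]/r_alpha xb gt0_muley ?lte_fin // addye ?scaled_neqNy ?leey.
have [y01|/negbTE yb] := boolP (0 < y < 1); last first.
  by rewrite [r_alpha _ y]/r_alpha yb gt0_muley ?lte_fin // addey ?scaled_neqNy ?leey.
have z01 : 0 < t * x + (1 - t) * y < 1.
  by case/andP: x01 => x0 x1; case/andP: y01 => y0 y1; apply/andP; split; nra.
rewrite !r_alpha_lse // -!EFinM -EFinD lee_fin.
have inv_gt0 : 0 < (alpha - 1)^-1 by rewrite invr_gt0 subr_gt0.
rewrite [t * (_ * _)]mulrCA [(1 - t) * (_ * _)]mulrCA -mulrDr ler_pM2l //.
by apply: renyi_lse_convex (ltW halpha) x01 y01 _; rewrite !ltW.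
Qed.
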